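(* Let $N\ge 1$ and $n\ge 2$ be integers, let $V=\mathbb{C}^N$ with basis $e_0,\dots,e_{N-1}$, and let $\kappa,h,\nu_0,g_0,\nu_n,g_n$ be complex numbers with $h,g_0,g_n\neq 0$. Define operators on $V^{\otimes n}$ by $$\hat T_0=K^{\mathrm{ra}}_1(\nu_0,g_0),\qquad \hat T_j=\check R^{\mathrm{ra}}_{j,j+1}(\kappa,h)\ (1\le j\le n-1),\qquad \hat T_n=K^{\mathrm{ra}}_n(\nu_n,g_n).$$ Then $T_j\mapsto \hat T_j$ ($0\le j\le n$) extends to an algebra homomorphism $\rho:H_n(1,1,1)\to\mathrm{End}(V^{\otimes n})$; i.e. the $\hat T_j$ satisfy all defining relations of $H_n(1,1,1)$.
   Context: Type $C$ affine Hecke algebra $H_n(t,t_n,t_0)$: the algebra generated by $T_0,\dots,T_n$ with relations $(T_0-t_0)(T_0+t_0^{-1})=0$; $(T_j-t)(T_j+t^{-1})=0$ for $1\le j\le n-1$; $(T_n-t_n)(T_n+t_n^{-1})=0$; $T_0T_1T_0T_1=T_1T_0T_1T_0$; $T_jT_{j+1}T_j=T_{j+1}T_jT_{j+1}$ for $1\le j\le n-2$; $T_{n-1}T_nT_{n-1}T_n=T_nT_{n-1}T_nT_{n-1}$; $T_jT_k=T_kT_j$ for $|j-k|\ge2$. For $H_n(1,1,1)$ all quadratic relations read $T_j^2=1$. Matrix elements: for $A\in\mathrm{End}(V)$, $Ae_j=\sum_k e_k[A]_j^k$; for $R\in\mathrm{End}(V\otimes V)$, $R(e_i\otimes e_j)=\sum_{k,l}[R]_{ij}^{kl}e_k\otimes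 e_l$. $P$ is the flip $P(x\otimes y)=y\otimes x$, and $\check R=RP$. For $A\in\mathrm{End}(V)$, $A_j\in\mathrm{End}(V^{\otimes n})$ acts as $A$ on the $j$-th factor and as identity elsewhere; similarly $\check R_{j,j+1}$ acts as $\check R$ on factors $j,j+1$. Binomial convention: $\binom{a}{b}=0$ unless $0\le b\le a$; $0^0=1$. Define $\epsilon(i,m,k)=1$ if $i\le k<m$, $-1$ if $m\le k<i$, $0$ otherwise. Jordanian $R$-matrix ($i,j,k,l\in\{0,\dots,N-1\}$, sum over integers $m$): $$[R^{\mathrm{ra}}(\kappa,h)]_{ij}^{kl}=(-1)^{j-l}h^{i+j-k-l}\Big\{\binom{i}{k}\binom{j}{l}-\frac{\kappa}{h}\sum_m(-1)^{m-k}\binom{i}{m}\binom{j+m-k-1}{l}\epsilon(j,m,k)\Big\}.$$ $K$-matrix ($j,k\in\{0,\dots,N-1\}$): $$[K^{\mathrm{ra}}(\nu,g)]_j^k=(-1)^j\binom{j}{k}g^{j-k}+2\nu\sum_{0\le l<j}(-1)^{j-l}\binom{j-l-1}{k-l}g^{j-k-1}.$$ *)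

(* Complex numbers are modelled by algC (algebraic complex
   numbers, mathcomp's numClosedFieldType). *)
From HB Require Import structures.
From mathcomp Require Import all_boot all_order all_algebra all_field.
Set Implicit Arguments. Unset Strict Implicit. Unset Printing Implicit Defensive.
Import Order.TTheory GRing.Theory Num.Theory.
Local Open Scope ring_scope.

Definition binz (a b : int) : algC :=
  if (0 <= b) && (b <= a) then ('C(`|a|%N, `|b|%N))%:R else 0.

Definition epsz (i m k : int) : algC :=
  if (i <= k) && (k < m) then 1 else if (m <= k) && (k < i) then -1 else 0.

(* [R^ra(kappa,h)]_{ij}^{kl}; the sum over integers m is restricted to
   0 <= m < N, outside of which binz i m vanishes (as i < N). *)
Definition Rra (N : nat) (kappa h : algC) (i j k l : nat) : algC :=
  (-1) ^ (j%:Z - l%:Z) * h ^ (i%:Z + j%:Z - k%:Z - l%:Z) *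
  (binz i k * binz j l
   - kappa / h * \sum_(0 <= m < N)
       (-1) ^ (m%:Z - k%:Z) * binz i m * binz (j%:Z + m%:Z - k%:Z - 1) l
       * epsz j m k).

Definition Kra (nu g : algC) (j k : nat) : algC :=
  (-1) ^+ j * binz j k * g ^ (j%:Z - k%:Z)
  + 2 * nu * \sum_(0 <= l < j)
      (-1) ^ (j%:Z - l%:Z) * binz (j%:Z - l%:Z - 1) (k%:Z - l%:Z)
      * g ^ (j%:Z - k%:Z - 1).

(* Basis of V^{\otimes n}: e_{x 0} (x) ... (x) e_{x (n-1)},
   x : {ffun 'I_n -> 'I_N}; tensor position p (0-based) = factor p+1. *)
Definition tidx (n N : nat) := {ffun 'I_n -> 'I_N}.

Definition digit n N (x : tidx n N) (p : nat) : nat :=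
  if @insub _ (fun q => q < n)%N _ p is Some q then val (x q) else 0%N.

(* operators on V^{\otimes n} as square matrices indexed by an enumeration
   of the basis; entry (row y, column x) is the coefficient of e_y in A e_x *)
Definition Op (n N : nat) := 'M[algC]_(#|{: tidx n N}|).

Definition mkOp n N (f : tidx n N -> tidx n N -> algC) : Op n N :=
  \matrix_(a, b) f (enum_val a) (enum_val b).

Definition agree_off n N (x y : tidx n N) (P : nat -> bool) : bool :=
  [forall q : 'I_n, ~~ P (val q) ==> (x q == y q)].

(* A_p for A with [A]_j^k = A j k, acting on 0-based position p *)
Definition op1 n N (A : nat -> nat -> algC) (p : nat) : Op n N :=
  mkOp (fun y x => A (digit x p) (digit y p) *
                   (agree_off x y (fun q => q == p))%:R).

(* \check R_{p,p+1} (0-based positions p, p+1) with \check R = R P,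
   so [\check R]_{ij}^{kl} = [R]_{ji}^{kl}. *)
Definition op2 n N (R : nat -> nat -> nat -> nat -> algC) (p : nat) : Op n N :=
  mkOp (fun y x => R (digit x p.+1) (digit x p) (digit y p) (digit y p.+1) *
                   (agree_off x y (fun q => (q == p) || (q == p.+1)))%:R).

Definition That (n N : nat) (kappa h nu0 g0 nun gn : algC) (j : nat) : Op n N :=
  if j == 0%N then @op1 n N (Kra nu0 g0) 0
  else if j == n then @op1 n N (Kra nun gn) n.-1
  else @op2 n N (Rra N kappa h) j.-1.

(* Identify V^{(x)n} with the polynomials in x_0, ..., x_(n-1) of degree < N in
   each variable, e_x |-> prod_i x_i^(x_i).  A direct binomial computation shows
   that K^ra(nu, g) acting on factor p, and \check R^ra(kappa, h) acting on
   factors p, p+1, become Demazure-Lusztig type operators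
       T f = f o s + c (f - f o s) / a
   for the affine reflections s : x_p |-> - x_p - g (root a = 2 x_p + g,
   c = - 2 nu) and s : (x_p, x_(p+1)) |-> (x_(p+1) - h, x_p + h)
   (root a = x_p - x_(p+1) + h, c = - kappa).  Evaluating such operators at a
   point t, every relation of H_n(1,1,1) becomes an identity between rational
   functions of the values f(w t), w in the group generated by the reflections;
   it holds because the reflections satisfy the Coxeter relations of type C and
   act on the roots as the corresponding Weyl group does. *)

From HB Require Import structures.
From mathcomp Require Import all_boot all_order all_algebra all_field.
From mathcomp Require Import ring zify.
From mathcomp.multinomials Require Import mpoly.
Set Implicit Arguments. Unset Strict Implicit. Unset Printing Implicit Defensive.
Import Order.TTheory GRing.Theory Num.Theory.
Local Open Scope ring_scope.

(** * Demazure-Lusztig calculus *)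

(* [dl_step c a u w] is the value at a point t of f o s + c (f - f o s) / a,
   given u = f t, w = f (s t) and a = a t. *)
Definition dl_step (F : fieldType) (c a u w : F) := w + c * (u - w) / a.

Lemma dl_stepP (F : fieldType) (c a u w x : F) :
  a != 0 -> a * (x - w) = c * (u - w) -> x = dl_step c a u w.
Proof. by move=> anz E; rewrite /dl_step -E [a * _]mulrC mulfK // addrC subrK. Qed.

Section DemazureLusztigCalculus.
Variables (F : fieldType) (P V : Type) (E : V -> P -> F).

Definition dl_rel (M : V -> V) (s : P -> P) (a : P -> F) (c : F) :=
  forall v t, a t != 0 -> E (M v) t = dl_step c (a t) (E v t) (E v (s t)).

Section OneOperator.
Variables (M : V -> V) (s : P -> P) (a : P -> F) (c : F).
Hypotheses (dlM : dl_rel M s a c) (ssK : forall t, s (s t) = t)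
           (a_s : forall t, a (s t) = - a t).

Lemma dl_rel_sqr v t : a t != 0 -> E (M (M v)) t = E v t.
Proof.
move=> nz; rewrite dlM // !dlM ?a_s ?oppr_eq0 // ssK /dl_step.
by field; rewrite nz oppr_eq0 nz.
Qed.

End OneOperator.

Section TwoOperators.
Variables (M1 M2 : V -> V) (s1 s2 : P -> P) (a1 a2 : P -> F) (c1 c2 : F).
Hypotheses (dlM1 : dl_rel M1 s1 a1 c1) (dlM2 : dl_rel M2 s2 a2 c2).

Lemma dl_rel_comm v t :
  (forall t, s1 (s2 t) = s2 (s1 t)) ->
  (forall t, a1 (s2 t) = a1 t) -> (forall t, a2 (s1 t) = a2 t) ->
  a1 t != 0 -> a2 t != 0 -> E (M1 (M2 v)) t = E (M2 (M1 v)) t.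
Proof.
move=> s12 a1s2 a2s1 nz1 nz2.
rewrite dlM1 // dlM2 // dlM2 ?a2s1 // dlM2 // dlM1 // dlM1 ?a1s2 // s12 /dl_step.
by field; rewrite nz1 nz2.
Qed.

Hypotheses (ss1K : forall t, s1 (s1 t) = t) (ss2K : forall t, s2 (s2 t) = t)
           (a1_s1 : forall t, a1 (s1 t) = - a1 t) (a2_s2 : forall t, a2 (s2 t) = - a2 t).

Lemma dl_rel_braid v t : c1 = c2 ->
  (forall t, s1 (s2 (s1 t)) = s2 (s1 (s2 t))) ->
  a1 (s2 t) = a1 t + a2 t -> a2 (s1 t) = a1 t + a2 t ->
  a1 (s2 (s1 t)) = a2 t -> a2 (s1 (s2 t)) = a1 t ->
  a1 t != 0 -> a2 t != 0 -> a1 t + a2 t != 0 ->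
  E (M1 (M2 (M1 v))) t = E (M2 (M1 (M2 v))) t.
Proof.
move=> c12 br a12 a21 a121 a212 nz1 nz2 nz12.
have dlM2c : dl_rel M2 s2 a2 c1 by rewrite c12.
do ![rewrite dlM1 ?a1_s1 ?a12 ?a121 ?oppr_eq0 //|
     rewrite dlM2c ?a2_s2 ?a21 ?a212 ?oppr_eq0 //].
rewrite ss1K ss2K br /dl_step.
by field; rewrite nz1 nz2 nz12 !oppr_eq0 nz1 nz2.
Qed.

Lemma dl_rel_braid4 v t :
  (forall t, s2 (s1 (s2 (s1 t))) = s1 (s2 (s1 (s2 t)))) ->
  a2 (s1 t) = a2 t - a1 t -> a1 (s2 t) = a1 t - a2 t *+ 2 ->
  a1 (s2 (s1 t)) = a1 t - a2 t *+ 2 -> a2 (s1 (s2 t)) = a2 t - a1 t ->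
  a2 (s1 (s2 (s1 t))) = a2 t -> a1 (s2 (s1 (s2 t))) = a1 t ->
  a1 t != 0 -> a2 t != 0 -> a2 t - a1 t != 0 -> a1 t - a2 t *+ 2 != 0 ->
  E (M1 (M2 (M1 (M2 v)))) t = E (M2 (M1 (M2 (M1 v)))) t.
Proof.
move=> br a21 a12 a121 a212 a2121 a1212 nz1 nz2 nz21 nz12.
do ![rewrite dlM1 ?ss2K ?a1_s1 ?a12 ?a121 ?a1212 ?oppr_eq0 //|
     rewrite dlM2 ?ss1K ?a2_s2 ?a21 ?a212 ?a2121 ?oppr_eq0 //].
rewrite ?ss1K ?ss2K ?br /dl_step; move: nz12; rewrite -mulr_natl => nz12.
by field; rewrite nz1 nz2 nz21 nz12 !oppr_eq0 nz1 nz2 nz21 nz12.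
Qed.

End TwoOperators.
End DemazureLusztigCalculus.

(** * The polynomial model of V^{(x)n} *)

Section TensorPolynomials.
Variables n N : nat.
Local Notation A := {mpoly algC[n]}.
Local Notation T := (tidx n N).
Local Notation vec := 'cV[algC]_#|{: T}|.

Definition monom (x : T) : A := \prod_(i < n) 'X_i ^+ x i.

Definition mnm_of (x : T) : 'X_{1..n} := [multinom val (x i) | i < n].

Lemma monomE x : monom x = 'X_[mnm_of x].
Proof. by rewrite mpolyXE_id /monom; apply: eq_bigr => i _; rewrite mnmE. Qed.

Lemma mnm_of_inj : injective mnm_of.
Proof.
move=> x y /mnmP E; apply/ffunP => i; apply/val_inj.
by have := E i; rewrite !mnmE.
Qed.

Definition poly_of (v : vec) : A := \sum_(y : T) v (enum_rank y) 0 *: monom y.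

Definition col_poly (M : Op n N) (x : T) : A :=
  \sum_(y : T) M (enum_rank y) (enum_rank x) *: monom y.

Lemma mcoeff_poly_of (v : vec) (y : T) : (poly_of v)@_(mnm_of y) = v (enum_rank y) 0.
Proof.
rewrite /poly_of raddf_sum /= (bigD1 y) //= big1 ?addr0.
  by rewrite mcoeffZ monomE mcoeffX eqxx mulr1.
move=> z /negbTE zy; rewrite mcoeffZ monomE mcoeffX.
case: eqP => [/mnm_of_inj E|]; last by rewrite mulr0.
by rewrite E eqxx in zy.
Qed.

Lemma poly_of_inj : injective poly_of.
Proof.
move=> u v E; apply/matrixP => a b; rewrite (ord1 b).
by rewrite -(enum_valK a) -!mcoeff_poly_of E.
Qed.

Lemma poly_of_mulmx (M : Op n N) (v : vec) :
  poly_of (M *m v) = \sum_(x : T) v (enum_rank x) 0 *: col_poly M x.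
Proof.
rewrite /poly_of /col_poly.
under eq_bigr => y _ do rewrite mxE scaler_suml.
rewrite exchange_big /= (reindex (@enum_rank T)) /=; last first.
  by exists enum_val => b _; rewrite ?enum_rankK ?enum_valK.
apply: eq_bigr => x _; rewrite scaler_sumr; apply: eq_bigr => y _.
by rewrite scalerA mulrC.
Qed.

Lemma matrix_poly_ext (M M' : Op n N) :
  (forall v : vec, poly_of (M *m v) = poly_of (M' *m v)) -> M = M'.
Proof.
move=> E; apply/matrixP => a b.
have := congr1 (fun w : vec => w a 0) (poly_of_inj (E (delta_mx b 0))).
by rewrite -!colE !mxE.
Qed.

End TensorPolynomials.

Lemma neq0_mcoeff (R : nzRingType) n (a : {mpoly R[n]}) m : a@_m != 0 -> a != 0.
Proof. by apply: contraNneq => ->; rewrite mcoeff0. Qed.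

Lemma mcoeffU_C (R : nzRingType) n (c : R) (i : 'I_n) : (c%:MP : {mpoly R[n]})@_U_(i) = 0.
Proof. by rewrite mcoeffC mnm1_eq0 mulr0. Qed.

Section Points.
Variable n : nat.
Local Notation A := {mpoly algC[n]}.
Local Notation point := (n.-tuple A).

Definition idp : point := [tuple 'X_i | i < n].

(* It is
   locked, like [reflK] and [reflR] below: otherwise rewriting in nested
   compositions triggers the unfolding of polynomial substitutions. *)
Definition comp_point : point -> point -> point :=
  locked (fun s t => [tuple s`_i \mPo t | i < n]).

Lemma point_eq (s t : point) : (forall k, (k < n)%N -> s`_k = t`_k) -> s = t.
Proof. by move=> E; apply: eq_from_tnth => i; rewrite !(tnth_nth 0) E. Qed.

Lemma nth_idp (i : 'I_n) : idp`_i = 'X_i.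
Proof. exact: nth_mktuple. Qed.

Lemma mcoeffU_idp (i : 'I_n) : idp`_i@_U_(i) = 1.
Proof. by rewrite nth_idp mcoeffXU eqxx. Qed.

Lemma mcoeffU_idp_neq (k : nat) (i : 'I_n) : k != i -> idp`_k@_U_(i) = 0.
Proof.
move=> ki; case: (ltnP k n) => kn; last by rewrite nth_default ?size_tuple ?mcoeff0.
by rewrite -[k]/(val (Ordinal kn)) nth_idp mcoeffXU -(inj_eq val_inj) (negbTE ki).
Qed.

Lemma comp_mpoly_idp f : f \mPo idp = f.
Proof. exact: comp_mpoly_id. Qed.

Lemma idp_comp k (t : point) : idp`_k \mPo t = t`_k.
Proof.
case: (ltnP k n) => kn.
  by rewrite -[k]/(val (Ordinal kn)) nth_idp comp_mpolyXU.
by rewrite !nth_default ?comp_mpoly0 ?size_tuple.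
Qed.

Lemma nth_comp_point (s t : point) k : (k < n)%N -> (comp_point s t)`_k = s`_k \mPo t.
Proof. by move=> kn; rewrite /comp_point -lock -[k]/(val (Ordinal kn)) nth_mktuple. Qed.

Lemma comp_mpolyA f (s t : point) : (f \mPo s) \mPo t = f \mPo comp_point s t.
Proof.
rewrite (comp_mpolyEX f s) (comp_mpolyEX f (comp_point s t)) raddf_sum /=.
apply: eq_bigr => m _; rewrite comp_mpolyZ; congr (_ *: _).
rewrite !comp_mpolyX rmorph_prod /=; apply: eq_bigr => i _.
by rewrite rmorphXn /= !(tnth_nth 0) nth_comp_point.
Qed.

End Points.
Arguments idp {n}.

Notation "x %:F" := (@FracField.tofrac _ x) (format "x %:F").

Section PolynomialDL.
Variables n N : nat.
Local Notation A := {mpoly algC[n]}.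
Local Notation point := (n.-tuple A).
Local Notation vec := 'cV[algC]_#|{: tidx n N}|.

Definition peval (v : vec) (t : point) : {fraction A} := (poly_of v \mPo t)%:F.

Definition root_at (a : A) (t : point) : {fraction A} := (a \mPo t)%:F.

Definition dl_operator (M : Op n N) (s : point) (a : A) (c : algC) :=
  forall v : vec, a * (poly_of (M *m v) - (poly_of v \mPo s)) =
                  c%:MP * (poly_of v - (poly_of v \mPo s)).

Lemma dl_operatorN M s a c : dl_operator M s a c -> dl_operator M s (- a) (- c).
Proof. by move=> dlM v; rewrite mulNr dlM mpolyCN mulNr. Qed.

Lemma dl_operatorP M s a c : dl_operator M s a c ->
  dl_rel peval (mulmx M) (comp_point s) (root_at a) (c%:MP)%:F.
Proof.
move=> dlM v t nz; apply: dl_stepP => //.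
have := congr1 (comp_mpoly t) (dlM v).
rewrite !rmorphM !rmorphB /= comp_mpolyC !comp_mpolyA => E.
by rewrite /peval /root_at -!tofracB -!tofracM E.
Qed.

Lemma peval_idp_ext (M M' : Op n N) :
  (forall v, peval (M *m v) idp = peval (M' *m v) idp) -> M = M'.
Proof.
move=> E; apply: matrix_poly_ext => v; apply/eqP; rewrite -tofrac_eq.
by have := E v; rewrite /peval !comp_mpoly_idp => ->.
Qed.

End PolynomialDL.

(** * Affine reflections *)

Section AffineReflections.
Variable n : nat.
Local Notation A := {mpoly algC[n]}.
Local Notation point := (n.-tuple A).

Definition reflK : nat -> algC -> point := locked (fun p g =>
  [tuple if val i == p then - idp`_p - g%:MP else idp`_i | i < n]).

Definition reflR : nat -> algC -> point := locked (fun p h =>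
  [tuple if val i == p then idp`_p.+1 - h%:MP
         else if val i == p.+1 then idp`_p + h%:MP else idp`_i | i < n]).

Definition rootK (p : nat) (g : algC) : A := 2%:R * idp`_p + g%:MP.

Definition rootR (p : nat) (h : algC) : A := idp`_p - idp`_p.+1 + h%:MP.

Lemma reflKE p g k : (k < n)%N ->
  (reflK p g)`_k = if k == p then - idp`_p - g%:MP else idp`_k.
Proof. by move=> kn; rewrite /reflK -lock -[k]/(val (Ordinal kn)) nth_mktuple. Qed.

Lemma reflRE p h k : (k < n)%N ->
  (reflR p h)`_k =
  if k == p then idp`_p.+1 - h%:MP else if k == p.+1 then idp`_p + h%:MP else idp`_k.
Proof. by move=> kn; rewrite /reflR -lock -[k]/(val (Ordinal kn)) nth_mktuple. Qed.

Lemma nth_reflK p g (t : point) k : (k < n)%N ->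
  (comp_point (reflK p g) t)`_k = if k == p then - t`_p - g%:MP else t`_k.
Proof.
move=> kn; rewrite nth_comp_point // reflKE //.
by case: eqP; rewrite ?rmorphB ?rmorphN /= ?comp_mpolyC idp_comp.
Qed.

Lemma nth_reflR p h (t : point) k : (k < n)%N ->
  (comp_point (reflR p h) t)`_k =
  if k == p then t`_p.+1 - h%:MP else if k == p.+1 then t`_p + h%:MP else t`_k.
Proof.
move=> kn; rewrite nth_comp_point // reflRE //.
by do 2?case: eqP; rewrite ?rmorphB ?rmorphD /= ?comp_mpolyC idp_comp.
Qed.

Lemma rootK_comp p g (t : point) : rootK p g \mPo t = 2%:R * t`_p + g%:MP.
Proof. by rewrite rmorphD rmorphM /= rmorph_nat comp_mpolyC idp_comp. Qed.

Lemma rootR_comp p h (t : point) : rootR p h \mPo t = t`_p - t`_p.+1 + h%:MP.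
Proof. by rewrite !rmorphD rmorphN /= comp_mpolyC !idp_comp. Qed.

End AffineReflections.
Arguments reflK {n}.
Arguments reflR {n}.
Arguments rootK {n} p g.
Arguments rootR {n} p h.

Ltac reflect_coords :=
  rewrite ?comp_mpolyN ?rootK_comp ?rootR_comp;
  do 5 (rewrite ?nth_reflK ?nth_reflR //; repeat (case: eqP => //= ?); subst => //; try lia);
  try ring.

Ltac point_coords := apply: point_eq => k kn; reflect_coords.

Section ReflectionRelations.
Variable n : nat.
Local Notation point := (n.-tuple {mpoly algC[n]}).

Lemma reflK_invol p g (t : point) : (p < n)%N ->
  comp_point (reflK p g) (comp_point (reflK p g) t) = t.
Proof. by move=> pn; point_coords. Qed.

Lemma reflR_invol p h (t : point) : (p.+1 < n)%N ->
  comp_point (reflR p h) (comp_point (reflR p h) t) = t.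
Proof.
move=> pn; have p0 : (p < n)%N by lia.
by point_coords.
Qed.

Lemma reflR_braid p h (t : point) : (p.+2 < n)%N ->
  comp_point (reflR p h) (comp_point (reflR p.+1 h) (comp_point (reflR p h) t)) =
  comp_point (reflR p.+1 h) (comp_point (reflR p h) (comp_point (reflR p.+1 h) t)).
Proof.
move=> pn; have p1 : (p.+1 < n)%N by lia. have p0 : (p < n)%N by lia.
by point_coords.
Qed.

Lemma reflK_comm p q g g' (t : point) : (p < n)%N -> (q < n)%N -> p != q ->
  comp_point (reflK p g) (comp_point (reflK q g') t) =
  comp_point (reflK q g') (comp_point (reflK p g) t).
Proof. by move=> pn qn pq; point_coords. Qed.

Lemma reflK_reflR_comm p q g h (t : point) :
  (p < n)%N -> (q.+1 < n)%N -> p != q -> p != q.+1 ->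
  comp_point (reflK p g) (comp_point (reflR q h) t) =
  comp_point (reflR q h) (comp_point (reflK p g) t).
Proof.
move=> pn qn pq pq1; have q0 : (q < n)%N by lia.
by point_coords.
Qed.

Lemma reflR_comm p q h (t : point) : (q.+1 < n)%N -> (p.+2 <= q)%N ->
  comp_point (reflR p h) (comp_point (reflR q h) t) =
  comp_point (reflR q h) (comp_point (reflR p h) t).
Proof.
move=> qn pq; have q0 : (q < n)%N by lia. have p1 : (p.+1 < n)%N by lia.
have p0 : (p < n)%N by lia.
by point_coords.
Qed.

Lemma reflK_reflR_braid4 p q g h (t : point) :
  (p.+1 < n)%N -> (q == p) || (q == p.+1) ->
  comp_point (reflR p h) (comp_point (reflK q g)
    (comp_point (reflR p h) (comp_point (reflK q g) t))) =
  comp_point (reflK q g) (comp_point (reflR p h)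
    (comp_point (reflK q g) (comp_point (reflR p h) t))).
Proof.
move=> pn /orP[] /eqP->; have p0 : (p < n)%N by lia.
all: by point_coords.
Qed.

End ReflectionRelations.

(** * Binomial identities for K^ra and R^ra *)

Lemma binz_nat (a b : nat) : binz a b = 'C(a, b)%:R.
Proof.
rewrite /binz le0z_nat lez_nat /=; case: leqP => // ab.
by rewrite bin_small.
Qed.

Lemma binz_negr (a b : int) : b < 0 -> binz a b = 0.
Proof. by rewrite /binz => b0; rewrite lt_geF. Qed.

Lemma epszE (a m k : nat) :
  epsz a m k = if (a <= k < m)%N then 1 else if (m <= k < a)%N then -1 else 0.
Proof. by rewrite /epsz !lez_nat !ltz_nat. Qed.

Lemma expz_natE (x : algC) (z : int) (u : nat) : z = u -> x ^ z = x ^+ u.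
Proof. by move=> ->. Qed.

Lemma big_nat_vanish (R : nmodType) (m N : nat) (F : nat -> R) : (m <= N)%N ->
  (forall k, (m <= k)%N -> F k = 0) ->
  \sum_(0 <= k < N) F k = \sum_(0 <= k < m) F k.
Proof.
move=> mN F0; rewrite (@big_cat_nat _ _ _ m 0 N) //=.
rewrite [X in _ + X]big1_seq ?addr0 // => k /andP[_].
by rewrite mem_iota => /andP[mk _]; apply: F0.
Qed.

Section KraPolynomial.
Variable R : comAlgType algC.
Implicit Types X : R.

Lemma sum_Kra_main (N j : nat) (g : algC) X : (j < N)%N ->
  \sum_(0 <= k < N) ((-1) ^+ j * binz j k * g ^ (j%:Z - k%:Z)) *: X ^+ k =
  (- X - g%:A) ^+ j.
Proof.
move=> jN; rewrite (@big_nat_vanish _ j.+1) //; last first.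
  by move=> k jk; rewrite binz_nat bin_small // mulr0 mul0r scale0r.
have -> : - X - g%:A = - (g%:A + X) by rewrite opprD addrC.
rewrite [in RHS]exprNn exprDn big_mkord mulr_sumr; apply: eq_bigr => k _.
have kj : (k <= j)%N by rewrite -ltnS.
rewrite binz_nat (expz_natE _ (u := j - k)) ?subzn // -[in LHS]mulr_algl -!in_algE.
by rewrite !rmorphM ?rmorphXn ?rmorphN ?rmorph1 ?rmorph_nat /=; ring.
Qed.

Lemma sum_Kra_tail (N j : nat) (g : algC) X : (j < N)%N ->
  \sum_(0 <= k < N) (\sum_(0 <= l < j) (-1) ^ (j%:Z - l%:Z) *
       binz (j%:Z - l%:Z - 1) (k%:Z - l%:Z) * g ^ (j%:Z - k%:Z - 1)) *: X ^+ k =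
  \sum_(0 <= l < j) (-1) ^+ (j - l) *: (X ^+ l * (X + g%:A) ^+ (j - l - 1)).
Proof.
move=> jN.
under eq_bigr => k _ do rewrite scaler_suml.
rewrite exchange_big /=; apply: eq_big_nat => l /andP[_ lj].
rewrite (@big_cat_nat _ _ _ l 0 N) //=; last by lia.
rewrite big1_seq ?add0r; last first.
  move=> k /andP[_]; rewrite mem_iota => /andP[_ kl].
  by rewrite binz_negr ?mulr0 ?mul0r ?scale0r //; lia.
rewrite (@big_cat_nat _ _ _ j l N) //=; try lia.
rewrite [X in _ + X]big1_seq ?addr0; last first.
  move=> k /andP[_]; rewrite mem_iota => /andP[jk _].
  have -> : j%:Z - l%:Z - 1 = (j - l - 1)%N :> int by lia.
  have -> : k%:Z - l%:Z = (k - l)%N :> int by lia.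
  by rewrite binz_nat bin_small ?mulr0 ?mul0r ?scale0r //; lia.
rewrite -{1}[l]add0n big_addn [X + _]addrC exprDn.
have -> : ((j - l - 1).+1 = j - l)%N by lia.
rewrite big_mkord mulr_sumr scaler_sumr; apply: eq_bigr => [[i /= ilt]] _.
have -> : j%:Z - l%:Z - 1 = (j - l - 1)%N :> int by lia.
have -> : (i + l)%:Z - l%:Z = i :> int by lia.
have -> : j%:Z - (i + l)%:Z - 1 = (j - l - 1 - i)%N :> int by lia.
have -> : j%:Z - l%:Z = (j - l)%N :> int by lia.
rewrite binz_nat -!exprnP -!in_algE -[in LHS]mulr_algl -[in RHS]mulr_algl -!in_algE.
by rewrite !rmorphM ?rmorphXn ?rmorphN ?rmorph1 ?rmorph_nat /= exprD; ring.
Qed.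

Lemma Kra_tail_root (j : nat) (g : algC) X :
  (2%:R * X + g%:A) *
    \sum_(0 <= l < j) (-1) ^+ (j - l) *: (X ^+ l * (X + g%:A) ^+ (j - l - 1)) =
  - (X ^+ j - (- X - g%:A) ^+ j).
Proof.
rewrite subrXX.
have -> : X - (- X - g%:A) = 2%:R * X + g%:A by ring.
rewrite -mulrN; congr (_ * _).
rewrite big_nat_rev big_mkord -sumrN; apply: eq_bigr => [[l /= lj]] _.
rewrite add0n.
have -> : (j - (j - l.+1) = l.+1)%N by lia.
have -> : (j - l.+1 = j.-1 - l)%N by lia.
have -> : (l.+1 - 1 = l)%N by lia.
have -> : - X - g%:A = - (X + g%:A) by ring.
rewrite -!in_algE -mulr_algl -in_algE [in RHS]exprNn.
by rewrite rmorphXn rmorphN rmorph1 exprS; ring.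
Qed.

Lemma Kra_root (N j : nat) (nu g : algC) X : (j < N)%N ->
  (2%:R * X + g%:A) *
    (\sum_(0 <= k < N) Kra nu g j k *: X ^+ k - (- X - g%:A) ^+ j) =
  (- (2 * nu)) *: (X ^+ j - (- X - g%:A) ^+ j).
Proof.
move=> jN; rewrite /Kra.
under eq_bigr => k _ do rewrite scalerDl -scalerA.
rewrite big_split /= sum_Kra_main // -scaler_sumr sum_Kra_tail //.
by rewrite addrAC subrr add0r -scalerAr Kra_tail_root scalerN scaleNr.
Qed.

End KraPolynomial.

Lemma Rra_main_termE (a b k l : nat) (h : algC) :
  (-1) ^ (a%:Z - l%:Z) * h ^ (b%:Z + a%:Z - k%:Z - l%:Z) * (binz b k * binz a l) =
  ('C(b, k)%:R * h ^+ (b - k)) * ('C(a, l)%:R * (- h) ^+ (a - l)).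
Proof.
rewrite !binz_nat.
case: (leqP k b) => kb; last by rewrite !(bin_small kb) !(mul0r, mulr0).
case: (leqP l a) => la; last by rewrite !(bin_small la) !(mul0r, mulr0).
rewrite (@expz_natE _ _ (a - l)) ?(@expz_natE h _ ((b - k) + (a - l))); try lia.
by rewrite [in RHS]exprNn exprD; ring.
Qed.

Lemma Rra_tail_termE (a b k l m : nat) (h kappa : algC) : h != 0 ->
  (-1) ^ (a%:Z - l%:Z) * h ^ (b%:Z + a%:Z - k%:Z - l%:Z) *
    (kappa / h * ((-1) ^ (m%:Z - k%:Z) * binz b m *
       binz (a%:Z + m%:Z - k%:Z - 1) l * epsz a m k)) =
  - kappa * (('C(b, m)%:R * h ^+ (b - m)) *
     (epsz a m k * ('C(a + m - k - 1, l)%:R * (- h) ^+ (a + m - k - 1 - l)))).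
Proof.
move=> hz; rewrite binz_nat.
case: (leqP m b) => mb; last by rewrite !(bin_small mb) !(mul0r, mulr0).
have [->|nz] := eqVneq (epsz a m k) 0; first by rewrite !(mul0r, mulr0).
have kam : (k < a + m)%N.
  by move: nz; rewrite epszE; do 2?case: ifP => [/andP[]|_]; rewrite ?eqxx //; lia.
have -> : a%:Z + m%:Z - k%:Z - 1 = (a + m - k - 1)%N by lia.
rewrite binz_nat.
case: (leqP l (a + m - k - 1)) => ld; last by rewrite !(bin_small ld) !(mul0r, mulr0).
have E1 : (-1 : algC) ^ (a%:Z - l%:Z) * (-1) ^ (m%:Z - k%:Z) =
          (-1) ^+ (a + m - k - 1 - l).+1.
  by rewrite -expfzDr ?oppr_eq0 ?oner_eq0 //; apply: expz_natE; lia.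
have E2 : h ^ (b%:Z + a%:Z - k%:Z - l%:Z) / h = h ^+ ((b - m) + (a + m - k - 1 - l)).
  by rewrite -[h^-1]expr1z exprz_inv -expfzDr //; apply: expz_natE; lia.
move: E1 E2; set u1 := (-1) ^ (a%:Z - l%:Z); set u2 := (-1) ^ (m%:Z - k%:Z).
set hp := h ^ _ => E1 E2.
transitivity (u1 * u2 * (hp / h) * (kappa * 'C(b, m)%:R * 'C(a + m - k - 1, l)%:R * epsz a m k)).
  by rewrite !mulrA; ring.
by rewrite E1 E2 exprS exprD (exprNn h); ring.
Qed.

Lemma RraE (N : nat) (kappa h : algC) (a b k l : nat) : h != 0 ->
  Rra N kappa h b a k l =
  ('C(b, k)%:R * h ^+ (b - k)) * ('C(a, l)%:R * (- h) ^+ (a - l)) +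
  kappa * \sum_(0 <= m < N) ('C(b, m)%:R * h ^+ (b - m)) *
     (epsz a m k * ('C(a + m - k - 1, l)%:R * (- h) ^+ (a + m - k - 1 - l))).
Proof.
move=> hz; rewrite /Rra mulrBr Rra_main_termE; congr (_ + _).
rewrite !mulr_sumr -sumrN; apply: eq_bigr => m _.
by rewrite Rra_tail_termE // mulNr opprK.
Qed.

Section RraPolynomial.
Variable R : comAlgType algC.
Implicit Types X Y Z : R.

Lemma sum_binomial_shift (N d : nat) (c : algC) X : (d < N)%N ->
  \sum_(0 <= k < N) ('C(d, k)%:R * c ^+ (d - k)) *: X ^+ k = (X + c%:A) ^+ d.
Proof.
move=> dN; rewrite (@big_nat_vanish _ d.+1) //; last first.
  by move=> k dk; rewrite bin_small // mul0r scale0r.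
rewrite addrC exprDn big_mkord; apply: eq_bigr => k _.
rewrite -!in_algE -mulr_algl -in_algE.
by rewrite rmorphM rmorphXn rmorph_nat /=; ring.
Qed.

Lemma telescope_epsz (N a m : nat) X Z : (a < N)%N -> (m < N)%N ->
  (X - Z) * \sum_(0 <= k < N) epsz a m k *: (X ^+ k * Z ^+ (a + m - k - 1)) =
  X ^+ m * Z ^+ a - X ^+ a * Z ^+ m.
Proof.
move=> aN mN; pose u k := X ^+ k * Z ^+ (a + m - k).
have step k : (k < a + m)%N ->
    (X - Z) * (X ^+ k * Z ^+ (a + m - k - 1)) = u k.+1 - u k.
  move=> kam; rewrite /u.
  have -> : (a + m - k.+1 = a + m - k - 1)%N by lia.
  have -> : (a + m - k = (a + m - k - 1).+1)%N by lia.
  by rewrite subn1 /= !exprS; ring.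
have vanish lo hi : (lo <= hi <= N)%N ->
    (forall k, (k < lo)%N || (hi <= k)%N -> epsz a m k = 0) ->
    \sum_(0 <= k < N) epsz a m k *: (X ^+ k * Z ^+ (a + m - k - 1)) =
    \sum_(lo <= k < hi) epsz a m k *: (X ^+ k * Z ^+ (a + m - k - 1)).
  move=> /andP[lh hN] e0; rewrite (@big_cat_nat _ _ _ lo 0 N) //=; last by lia.
  rewrite big1_seq ?add0r; last first.
    move=> k /andP[_]; rewrite mem_iota => /andP[_ kl].
    by rewrite e0 ?scale0r //; apply/orP; left; lia.
  rewrite (@big_cat_nat _ _ _ hi lo N) //= [X in _ + X]big1_seq ?addr0 //.
  move=> k /andP[_]; rewrite mem_iota => /andP[hk _].
  by rewrite e0 ?scale0r //; apply/orP; right; lia.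
have uam : u m = X ^+ m * Z ^+ a by rewrite /u; congr (_ * _ ^+ _); lia.
have uaa : u a = X ^+ a * Z ^+ m by rewrite /u; congr (_ * _ ^+ _); lia.
case: (leqP a m) => am.
- rewrite (@vanish a m); first last.
  + by move=> k /orP[] ?; rewrite epszE; do 2?case: ifP => [/andP[? ?]|_] //; exfalso; lia.
  + by rewrite am ltnW.
  rewrite mulr_sumr; transitivity (\sum_(a <= k < m) (u k.+1 - u k)).
    by apply: eq_big_nat => k /andP[ak km]; rewrite epszE ifT ?scale1r ?step //; lia.
  by rewrite telescope_sumr // uam uaa.
- rewrite (@vanish m a); first last.
  + by move=> k /orP[] ?; rewrite epszE; do 2?case: ifP => [/andP[? ?]|_] //; exfalso; lia.
  + by rewrite (ltnW am) ltnW.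
  rewrite mulr_sumr; transitivity (- \sum_(m <= k < a) (u k.+1 - u k)).
    rewrite -sumrN; apply: eq_big_nat => k /andP[mk ka].
    have akm : (a <= k < m)%N = false by apply/negbTE/andP => -[? ?]; lia.
    by rewrite epszE akm ifT ?scaleN1r ?mulrN ?step //; lia.
  by rewrite telescope_sumr 1?ltnW // uam uaa opprB.
Qed.

Lemma sum_Rra_main (N a b : nat) (h : algC) X Y : (a < N)%N -> (b < N)%N ->
  \sum_(0 <= k < N) \sum_(0 <= l < N)
     ('C(b, k)%:R * h ^+ (b - k) * ('C(a, l)%:R * (- h) ^+ (a - l))) *:
       (X ^+ k * Y ^+ l) = (X + h%:A) ^+ b * (Y - h%:A) ^+ a.
Proof.
move=> aN bN; rewrite -scaleNr -(sum_binomial_shift h X bN).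
rewrite -(sum_binomial_shift (- h) Y aN) mulr_suml.
apply: eq_bigr => k _; rewrite mulr_sumr; apply: eq_bigr => l _.
by rewrite -scalerAl -scalerAr scalerA.
Qed.

Lemma sum_Rra_tail (N a b : nat) (kappa h : algC) X Y : (a < N)%N ->
  \sum_(0 <= k < N) \sum_(0 <= l < N)
     (kappa * \sum_(0 <= m < N) 'C(b, m)%:R * h ^+ (b - m) *
        (epsz a m k * ('C(a + m - k - 1, l)%:R * (- h) ^+ (a + m - k - 1 - l)))) *:
       (X ^+ k * Y ^+ l) =
  kappa *: \sum_(0 <= m < N) ('C(b, m)%:R * h ^+ (b - m)) *:
     \sum_(0 <= k < N) epsz a m k *: (X ^+ k * (Y - h%:A) ^+ (a + m - k - 1)).
Proof.
move=> aN.
have inner (m k : nat) : (m < N)%N ->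
  \sum_(0 <= l < N) (epsz a m k *
      ('C(a + m - k - 1, l)%:R * (- h) ^+ (a + m - k - 1 - l))) *: Y ^+ l =
  epsz a m k *: (Y - h%:A) ^+ (a + m - k - 1).
  move=> mN; under eq_bigr => l _ do rewrite -scalerA.
  rewrite -scaler_sumr; have [->|nz] := eqVneq (epsz a m k) 0; first by rewrite !scale0r.
  rewrite -scaleNr sum_binomial_shift //; move: nz; rewrite epszE.
  by do 2?case: ifP => [/andP[? ?] _|_]; rewrite ?eqxx //; lia.
transitivity (\sum_(0 <= k < N) \sum_(0 <= m < N)
    (kappa * ('C(b, m)%:R * h ^+ (b - m))) *:
    (X ^+ k * \sum_(0 <= l < N) (epsz a m k *
      ('C(a + m - k - 1, l)%:R * (- h) ^+ (a + m - k - 1 - l))) *: Y ^+ l)).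
  apply: eq_bigr => k _.
  under eq_bigr => l _ do rewrite mulr_sumr scaler_suml.
  rewrite exchange_big /=; apply: eq_bigr => m _.
  rewrite mulr_sumr scaler_sumr; apply: eq_bigr => l _.
  by rewrite -scalerAr scalerA !mulrA.
rewrite exchange_big scaler_sumr /=; apply: eq_big_nat => m /andP[_ mN].
rewrite scalerA scaler_sumr; apply: eq_bigr => k _.
by rewrite inner // -scalerAr.
Qed.

Lemma Rra_root (N a b : nat) (kappa h : algC) X Y : (a < N)%N -> (b < N)%N -> h != 0 ->
  (X - Y + h%:A) *
    (\sum_(0 <= k < N) \sum_(0 <= l < N) Rra N kappa h b a k l *: (X ^+ k * Y ^+ l)
     - (Y - h%:A) ^+ a * (X + h%:A) ^+ b) =
  (- kappa) *: (X ^+ a * Y ^+ b - (Y - h%:A) ^+ a * (X + h%:A) ^+ b).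
Proof.
move=> aN bN hz.
under eq_bigr => k _ do under eq_bigr => l _ do rewrite RraE // scalerDl.
under eq_bigr => k _ do rewrite big_split /=.
rewrite big_split /= sum_Rra_main // sum_Rra_tail //; set Z := Y - h%:A.
have -> : X - Y + h%:A = X - Z by rewrite /Z; ring.
rewrite addrAC [_ * Z ^+ a]mulrC subrr add0r -scalerAr mulr_sumr.
under eq_big_nat => m /andP[_ mN] do
  rewrite -scalerAr (telescope_epsz X Z aN mN) scalerBr scalerAl scalerAr.
rewrite sumrB -mulr_suml -mulr_sumr !sum_binomial_shift // /Z subrK.
by rewrite scaleNr -scalerN opprB mulrC.
Qed.

End RraPolynomial.

(** * The operators as Demazure-Lusztig operators *)

Section TensorOperators.
Variables n N : nat.
Local Notation A := {mpoly algC[n]}.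
Local Notation T := (tidx n N).

Lemma dl_operator_monom (M : Op n N) s a c :
  (forall x : T, a * (col_poly M x - (monom x \mPo s)) =
                 c%:MP * (monom x - (monom x \mPo s))) ->
  dl_operator M s a c.
Proof.
move=> B v.
have -> : poly_of v \mPo s = \sum_(y : T) v (enum_rank y) 0 *: (monom y \mPo s).
  rewrite /poly_of raddf_sum; apply: eq_bigr => y _ /=.
  exact: comp_mpolyZ.
rewrite poly_of_mulmx /poly_of -!sumrB !mulr_sumr; apply: eq_bigr => x _.
by rewrite -!scalerBr -!scalerAr B.
Qed.

Definition set_digit (x : T) (i : 'I_n) (k : 'I_N) : T :=
  [ffun q => if q == i then k else x q].

Definition set_digit2 (x : T) (i j : 'I_n) (k l : 'I_N) : T :=
  [ffun q => if q == i then k else if q == j then l else x q].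

Lemma agree_off1 (x y : T) (i : 'I_n) :
  agree_off x y (fun q => q == val i) = (y == set_digit x i (y i)).
Proof.
apply/forallP/eqP => [H|->].
  apply/ffunP => q; rewrite ffunE; case: eqP => [->//|/eqP qi].
  by have := H q; rewrite (inj_eq val_inj) qi /= => /eqP.
by move=> q; apply/implyP; rewrite (inj_eq val_inj) ffunE => /negbTE ->.
Qed.

Lemma agree_off2 (x y : T) (i j : 'I_n) :
  agree_off x y (fun q => (q == val i) || (q == val j)) =
  (y == set_digit2 x i j (y i) (y j)).
Proof.
apply/forallP/eqP => [H|->].
  apply/ffunP => q; rewrite ffunE; case: eqP => [->//|/eqP qi].
  case: eqP => [->//|/eqP qj].
  by have := H q; rewrite !(inj_eq val_inj) (negbTE qi) (negbTE qj) /= => /eqP.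
move=> q; apply/implyP; rewrite !(inj_eq val_inj) negb_or ffunE.
by case/andP => /negbTE -> /negbTE ->.
Qed.

Lemma sum_agree_off1 (x : T) (i : 'I_n) (G : T -> A) :
  \sum_(y : T) (agree_off x y (fun q => q == val i))%:R *: G y =
  \sum_(k : 'I_N) G (set_digit x i k).
Proof.
have E (y : T) : (agree_off x y (fun q => q == val i))%:R =
    \sum_(k : 'I_N) ((y == set_digit x i k)%:R : algC).
  rewrite agree_off1 (bigD1 (y i)) //= big1 ?addr0 // => k /negbTE kn.
  case: eqP => // E; move: kn; have := congr1 (fun f : T => f i) E.
  by rewrite ffunE eqxx => <-; rewrite eqxx.
under eq_bigr => y _ do rewrite E scaler_suml.
rewrite exchange_big /=; apply: eq_bigr => k _.
rewrite (bigD1 (set_digit x i k)) //= eqxx scale1r big1 ?addr0 // => y /negbTE ->.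
by rewrite scale0r.
Qed.

Lemma sum_agree_off2 (x : T) (i j : 'I_n) (G : T -> A) : i != j ->
  \sum_(y : T) (agree_off x y (fun q => (q == val i) || (q == val j)))%:R *: G y =
  \sum_(k : 'I_N) \sum_(l : 'I_N) G (set_digit2 x i j k l).
Proof.
move=> ij.
have E (y : T) : (agree_off x y (fun q => (q == val i) || (q == val j)))%:R =
    \sum_(k : 'I_N) \sum_(l : 'I_N) ((y == set_digit2 x i j k l)%:R : algC).
  rewrite agree_off2 (bigD1 (y i)) //= (bigD1 (y j)) //= big1 ?addr0.
    rewrite big1 ?addr0 // => k /negbTE kn; apply: big1 => l _.
    case: eqP => // E; move: kn; have := congr1 (fun f : T => f i) E.
    by rewrite ffunE eqxx => <-; rewrite eqxx.
  move=> l /negbTE ln; case: eqP => // E; move: ln.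
  have := congr1 (fun f : T => f j) E.
  by rewrite ffunE eq_sym (negbTE ij) eqxx => <-; rewrite eqxx.
under eq_bigr => y _ do rewrite E scaler_suml.
rewrite exchange_big /=; apply: eq_bigr => k _.
under eq_bigr => y _ do rewrite scaler_suml.
rewrite exchange_big /=; apply: eq_bigr => l _.
rewrite (bigD1 (set_digit2 x i j k l)) //= eqxx scale1r big1 ?addr0 // => y /negbTE ->.
by rewrite scale0r.
Qed.

Definition monom_off1 (x : T) (i : 'I_n) : A := \prod_(q < n | q != i) 'X_q ^+ x q.

Definition monom_off2 (x : T) (i j : 'I_n) : A :=
  \prod_(q < n | (q != i) && (q != j)) 'X_q ^+ x q.

Lemma monom_split1 x i : monom x = monom_off1 x i * 'X_i ^+ x i.
Proof. by rewrite /monom (bigD1 i) //= mulrC. Qed.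

Lemma monom_split2 x i j : i != j ->
  monom x = monom_off2 x i j * ('X_i ^+ x i * 'X_j ^+ x j).
Proof.
move=> ij; rewrite /monom (bigD1 i) //= (bigD1 j) //=; last by rewrite eq_sym.
by rewrite [RHS]mulrC -mulrA.
Qed.

Lemma monom_set_digit x i k : monom (set_digit x i k) = monom_off1 x i * 'X_i ^+ k.
Proof.
rewrite (monom_split1 _ i) ffunE eqxx; congr (_ * _).
by apply: eq_bigr => q /negbTE qi; rewrite ffunE qi.
Qed.

Lemma monom_set_digit2 x i j k l : i != j ->
  monom (set_digit2 x i j k l) = monom_off2 x i j * ('X_i ^+ k * 'X_j ^+ l).
Proof.
move=> ij; rewrite (monom_split2 _ ij) !ffunE eqxx eq_sym (negbTE ij) eqxx.
congr (_ * _); apply: eq_bigr => q /andP[/negbTE qi /negbTE qj].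
by rewrite ffunE qi qj.
Qed.

Lemma digit_ord (x : T) (i : 'I_n) : digit x (val i) = val (x i).
Proof. by rewrite /digit valK. Qed.

Lemma col_poly_op1 (B : nat -> nat -> algC) (x : T) (i : 'I_n) :
  col_poly (@op1 n N B (val i)) x =
  monom_off1 x i * \sum_(k : 'I_N) B (x i) k *: 'X_i ^+ k.
Proof.
rewrite /col_poly /op1 /mkOp.
under eq_bigr => y _ do rewrite mxE !enum_rankK mulrC -scalerA.
rewrite sum_agree_off1 mulr_sumr; apply: eq_bigr => k _.
by rewrite monom_set_digit !digit_ord ffunE eqxx scalerAr.
Qed.

Lemma col_poly_op2 (B : nat -> nat -> nat -> nat -> algC) (x : T) (i j : 'I_n) :
  val j = (val i).+1 ->
  col_poly (@op2 n N B (val i)) x =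
  monom_off2 x i j * \sum_(k : 'I_N) \sum_(l : 'I_N)
    B (x j) (x i) k l *: ('X_i ^+ k * 'X_j ^+ l).
Proof.
move=> ji; have ij : i != j by apply/eqP => E; move: ji; rewrite E; lia.
rewrite /col_poly /op2 /mkOp -ji.
under eq_bigr => y _ do rewrite mxE !enum_rankK mulrC -scalerA.
rewrite sum_agree_off2 // mulr_sumr; apply: eq_bigr => k _.
rewrite mulr_sumr; apply: eq_bigr => l _.
rewrite monom_set_digit2 // !digit_ord !ffunE eqxx eq_sym (negbTE ij) eqxx.
by rewrite scalerAr.
Qed.

Lemma monom_reflK (x : T) (i : 'I_n) g :
  monom x \mPo reflK i g = monom_off1 x i * (- 'X_i - g%:MP) ^+ x i.
Proof.
rewrite /monom rmorph_prod (bigD1 i) //= rmorphXn /= comp_mpolyXU reflKE // eqxx.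
rewrite nth_idp mulrC; congr (_ * _); apply: eq_bigr => q qi.
by rewrite rmorphXn /= comp_mpolyXU reflKE // (inj_eq val_inj) (negbTE qi) nth_idp.
Qed.

Lemma monom_reflR (x : T) (i j : 'I_n) h : val j = (val i).+1 ->
  monom x \mPo reflR i h =
  monom_off2 x i j * (('X_j - h%:MP) ^+ x i * ('X_i + h%:MP) ^+ x j).
Proof.
move=> ji; have ij : i != j by apply/eqP => E; move: ji; rewrite E; lia.
rewrite /monom rmorph_prod (bigD1 i) //= (bigD1 j) //=; last by rewrite eq_sym.
rewrite !rmorphXn /= !comp_mpolyXU !reflRE // eqxx ji eqxx (gtn_eqF (ltnSn _)).
rewrite -ji !nth_idp [RHS]mulrC -mulrA; congr (_ * (_ * _)).
apply: eq_bigr => q /andP[qi qj].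
rewrite rmorphXn /= comp_mpolyXU reflRE // -ji !(inj_eq val_inj) (negbTE qi) (negbTE qj).
by rewrite nth_idp.
Qed.

Lemma op1_Kra_dl p nu g : (p < n)%N ->
  dl_operator (@op1 n N (Kra nu g) p) (reflK p g) (rootK p g) (- (2 * nu)).
Proof.
move=> pn; pose i := Ordinal pn; rewrite -[p]/(val i).
apply: dl_operator_monom => x.
rewrite col_poly_op1 monom_reflK (monom_split1 x i) /rootK nth_idp.
have := Kra_root nu g ('X_i : A) (ltn_ord (x i)).
rewrite big_mkord alg_mpolyC -mul_mpolyC => U.
by rewrite -!mulrBr mulrCA U; ring.
Qed.

Lemma op2_Rra_dl p kappa h : (p.+1 < n)%N -> h != 0 ->
  dl_operator (@op2 n N (Rra N kappa h) p) (reflR p h) (rootR p h) (- kappa).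
Proof.
move=> pn hz; have pn0 : (p < n)%N by lia.
pose i := Ordinal pn0; pose j := Ordinal pn; rewrite -[p]/(val i).
have ji : val j = (val i).+1 by [].
have ij : i != j by apply/eqP => E; move: ji; rewrite E; lia.
apply: dl_operator_monom => x.
rewrite (col_poly_op2 _ _ ji) (monom_reflR _ _ ji) (monom_split2 x ij) /rootR.
rewrite -ji !nth_idp.
have := Rra_root kappa ('X_i : A) ('X_j) (ltn_ord (x i)) (ltn_ord (x j)) hz.
under eq_bigr => k _ do rewrite big_mkord.
rewrite big_mkord alg_mpolyC -mul_mpolyC => U.
by rewrite -!mulrBr mulrCA U; ring.
Qed.

End TensorOperators.

(** * The relations of H_n(1,1,1) *)

Ltac root_at_coords :=
  rewrite /root_at -?tofracMn -?tofracN -?tofracD -?tofracB;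
  congr (FracField.tofrac _); reflect_coords.

Section HeckeRelations.
Variables n N : nat.
Local Notation TK p nu g := (@op1 n N (Kra nu g) p).
Local Notation TR p kappa h := (@op2 n N (Rra N kappa h) p).

(* A linear combination of roots is nonzero: its coefficient at x_i is c. *)
Ltac root_neq0 i c :=
  rewrite /root_at !comp_mpoly_idp -?tofracMn -?tofracN -?tofracD -?tofracB tofrac_eq0;
  apply: (@neq0_mcoeff _ _ _ U_(i)%MM);
  rewrite /rootK /rootR ?mulr_natl
    !(mcoeffD, mcoeffB, mcoeffN, mcoeffMn, mcoeffU_C) ?mcoeffU_idp;
  rewrite ?mcoeffU_idp_neq; [| rewrite /=; lia ..];
  let e := fresh "e" in set e := (X in X != 0); have -> : e = c by rewrite /e; ring.

Lemma TK_sqr p nu g : (p < n)%N -> TK p nu g *m TK p nu g = 1%:M.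
Proof.
move=> pn; apply: peval_idp_ext => v; rewrite mul1mx -mulmxA.
apply: (dl_rel_sqr (dl_operatorP (op1_Kra_dl (N := N) nu g pn))) => [t|t|].
- exact: reflK_invol.
- by root_at_coords.
- by root_neq0 (Ordinal pn) (2%:R : algC); rewrite pnatr_eq0.
Qed.

Lemma TR_sqr p kappa h : (p.+1 < n)%N -> h != 0 -> TR p kappa h *m TR p kappa h = 1%:M.
Proof.
move=> pn hz; have p0 : (p < n)%N by lia.
apply: peval_idp_ext => v; rewrite mul1mx -mulmxA.
apply: (dl_rel_sqr (dl_operatorP (op2_Rra_dl (N := N) kappa pn hz))) => [t|t|].
- exact: reflR_invol.
- by root_at_coords.
- by root_neq0 (Ordinal p0) (1 : algC); rewrite oner_eq0.
Qed.

Lemma TK_comm p q nu g nu' g' : (p < n)%N -> (q < n)%N -> p != q ->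
  TK p nu g *m TK q nu' g' = TK q nu' g' *m TK p nu g.
Proof.
move=> pn qn pq; apply: peval_idp_ext => v; rewrite -!mulmxA.
apply: (dl_rel_comm (dl_operatorP (op1_Kra_dl (N := N) nu g pn))
                    (dl_operatorP (op1_Kra_dl (N := N) nu' g' qn))) => [t|t|t||].
- exact: reflK_comm.
- by root_at_coords.
- by root_at_coords.
- by root_neq0 (Ordinal pn) (2%:R : algC); rewrite pnatr_eq0.
- by root_neq0 (Ordinal qn) (2%:R : algC); rewrite pnatr_eq0.
Qed.

Lemma TK_TR_comm p q nu g kappa h :
  (p < n)%N -> (q.+1 < n)%N -> p != q -> p != q.+1 -> h != 0 ->
  TK p nu g *m TR q kappa h = TR q kappa h *m TK p nu g.
Proof.
move=> pn qn pq pq1 hz; have q0 : (q < n)%N by lia.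
apply: peval_idp_ext => v; rewrite -!mulmxA.
apply: (dl_rel_comm (dl_operatorP (op1_Kra_dl (N := N) nu g pn))
                    (dl_operatorP (op2_Rra_dl (N := N) kappa qn hz))) => [t|t|t||].
- exact: reflK_reflR_comm.
- by root_at_coords.
- by root_at_coords.
- by root_neq0 (Ordinal pn) (2%:R : algC); rewrite pnatr_eq0.
- by root_neq0 (Ordinal q0) (1 : algC); rewrite oner_eq0.
Qed.

Lemma TR_comm p q kappa h : (q.+1 < n)%N -> (p.+2 <= q)%N -> h != 0 ->
  TR p kappa h *m TR q kappa h = TR q kappa h *m TR p kappa h.
Proof.
move=> qn pq hz; have pn : (p.+1 < n)%N by lia.
have p0 : (p < n)%N by lia. have q0 : (q < n)%N by lia.
apply: peval_idp_ext => v; rewrite -!mulmxA.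
apply: (dl_rel_comm (dl_operatorP (op2_Rra_dl (N := N) kappa pn hz))
                    (dl_operatorP (op2_Rra_dl (N := N) kappa qn hz))) => [t|t|t||].
- exact: reflR_comm.
- by root_at_coords.
- by root_at_coords.
- by root_neq0 (Ordinal p0) (1 : algC); rewrite oner_eq0.
- by root_neq0 (Ordinal q0) (1 : algC); rewrite oner_eq0.
Qed.

Lemma TR_braid p kappa h : (p.+2 < n)%N -> h != 0 ->
  TR p kappa h *m TR p.+1 kappa h *m TR p kappa h =
  TR p.+1 kappa h *m TR p kappa h *m TR p.+1 kappa h.
Proof.
move=> pn hz; have p1 : (p.+1 < n)%N by lia. have p0 : (p < n)%N by lia.
apply: peval_idp_ext => v; rewrite -!mulmxA.
apply: (dl_rel_braid (dl_operatorP (op2_Rra_dl (N := N) kappa p1 hz))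
          (dl_operatorP (op2_Rra_dl (N := N) kappa pn hz))) => [t|t|t|t||t|||||||] //.
all: try exact: reflR_invol.
all: try by root_at_coords.
- exact: reflR_braid.
- by root_neq0 (Ordinal p0) (1 : algC); rewrite oner_eq0.
- by root_neq0 (Ordinal p1) (1 : algC); rewrite oner_eq0.
- by root_neq0 (Ordinal p0) (1 : algC); rewrite oner_eq0.
Qed.

Lemma TK_TR_braid4_first nu g kappa h : (1 < n)%N -> h != 0 ->
  TK 0 nu g *m TR 0 kappa h *m TK 0 nu g *m TR 0 kappa h =
  TR 0 kappa h *m TK 0 nu g *m TR 0 kappa h *m TK 0 nu g.
Proof.
move=> n1 hz; have n0 : (0 < n)%N by lia.
apply: peval_idp_ext => v; rewrite -!mulmxA.
apply: (dl_rel_braid4 (dl_operatorP (op1_Kra_dl (N := N) nu g n0))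
          (dl_operatorP (op2_Rra_dl (N := N) kappa n1 hz))) => [t|t|t|t|t||||||||||].
all: try exact: reflK_invol.
all: try exact: reflR_invol.
all: try by root_at_coords.
- exact: reflK_reflR_braid4.
- by root_neq0 (Ordinal n0) (2%:R : algC); rewrite pnatr_eq0.
- by root_neq0 (Ordinal n0) (1 : algC); rewrite oner_eq0.
- by root_neq0 (Ordinal n0) (-1 : algC); rewrite oppr_eq0 oner_eq0.
- by root_neq0 (Ordinal n1) (2%:R : algC); rewrite pnatr_eq0.
Qed.

Lemma TK_TR_braid4_last p nu g kappa h : (p.+1 < n)%N -> h != 0 ->
  TK p.+1 nu g *m TR p kappa h *m TK p.+1 nu g *m TR p kappa h =
  TR p kappa h *m TK p.+1 nu g *m TR p kappa h *m TK p.+1 nu g.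
Proof.
move=> pn hz; have p0 : (p < n)%N by lia.
apply: peval_idp_ext => v; rewrite -!mulmxA.
apply: (dl_rel_braid4 (dl_operatorP (op1_Kra_dl (N := N) nu g pn))
          (dl_operatorP (dl_operatorN (op2_Rra_dl (N := N) kappa pn hz)))) => [t|t|t|t|t||||||||||].
all: try exact: reflK_invol.
all: try exact: reflR_invol.
all: try by root_at_coords.
- by apply: reflK_reflR_braid4; rewrite // eqxx orbT.
- by root_neq0 (Ordinal pn) (2%:R : algC); rewrite pnatr_eq0.
- by root_neq0 (Ordinal p0) (-1 : algC); rewrite oppr_eq0 oner_eq0.
- by root_neq0 (Ordinal p0) (-1 : algC); rewrite oppr_eq0 oner_eq0.
- by root_neq0 (Ordinal p0) (2%:R : algC); rewrite pnatr_eq0.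
Qed.

End HeckeRelations.

Section HatOperators.
Variables (N n : nat) (kappa h nu0 g0 nun gn : algC).
Hypotheses (n2 : (2 <= n)%N) (hz : h != 0).
Local Notation T := (That n N kappa h nu0 g0 nun gn).

Lemma That_first : T 0 = @op1 n N (Kra nu0 g0) 0.
Proof. by rewrite /That eqxx. Qed.

Lemma That_last : T n = @op1 n N (Kra nun gn) n.-1.
Proof. by rewrite /That ifF ?eqxx //; apply/negbTE; lia. Qed.

Lemma That_mid j : (0 < j < n)%N -> T j = @op2 n N (Rra N kappa h) j.-1.
Proof. by move=> /andP[j0 jn]; rewrite /That ifF ?ifF //; apply/negbTE; lia. Qed.

Lemma That_sqr j : (j <= n)%N -> T j *m T j = 1%:M.
Proof.
move=> jn; case: (posnP j) => [->|j0]; first by rewrite That_first; apply: TK_sqr; lia.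
have [jlt|->] : (j < n)%N \/ j = n by lia.
  by rewrite That_mid; [apply: TR_sqr => //; lia | lia].
by rewrite That_last; apply: TK_sqr; lia.
Qed.

Lemma That_braid4_first : T 0 *m T 1 *m T 0 *m T 1 = T 1 *m T 0 *m T 1 *m T 0.
Proof. by rewrite That_first That_mid //; apply: TK_TR_braid4_first. Qed.

Lemma That_braid j : (1 <= j)%N -> (j <= n - 2)%N ->
  T j *m T j.+1 *m T j = T j.+1 *m T j *m T j.+1.
Proof.
move=> j1 jn; rewrite !That_mid; try lia.
by rewrite (_ : j.+1.-1 = j.-1.+1); [apply: TR_braid => //; lia | lia].
Qed.

Lemma That_braid4_last :
  T n.-1 *m T n *m T n.-1 *m T n = T n *m T n.-1 *m T n *m T n.-1.
Proof.
rewrite That_last That_mid; last by lia.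
by rewrite (_ : n.-1 = n.-2.+1); [symmetry; apply: TK_TR_braid4_last => //; lia | lia].
Qed.

Lemma That_comm j k : (k <= n)%N -> (j + 2 <= k)%N -> T j *m T k = T k *m T j.
Proof.
move=> kn jk; have [klt|->] : (k < n)%N \/ k = n by lia.
  rewrite [T k]That_mid; last by lia.
  case: (posnP j) => [->|j0]; first by rewrite That_first; apply: TK_TR_comm => //; lia.
  by rewrite That_mid; [apply: TR_comm => //; lia | lia].
rewrite That_last; case: (posnP j) => [->|j0].
  by rewrite That_first; apply: TK_comm; lia.
by rewrite That_mid; [symmetry; apply: TK_TR_comm => //; lia | lia].
Qed.

End HatOperators.

Theorem theorem2 (N n : nat) (kappa h nu0 g0 nun gn : algC) :
  (1 <= N)%N -> (2 <= n)%N -> h != 0 -> g0 != 0 -> gn != 0 ->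
  let T := That n N kappa h nu0 g0 nun gn in
  (forall j, (j <= n)%N -> T j *m T j = 1%:M) /\
  (T 0%N *m T 1%N *m T 0%N *m T 1%N = T 1%N *m T 0%N *m T 1%N *m T 0%N) /\
  (forall j, (1 <= j)%N -> (j <= n - 2)%N ->
     T j *m T j.+1 *m T j = T j.+1 *m T j *m T j.+1) /\
  (T n.-1 *m T n *m T n.-1 *m T n = T n *m T n.-1 *m T n *m T n.-1) /\
  (forall j k, (j <= n)%N -> (k <= n)%N -> (j + 2 <= k)%N ->
     T j *m T k = T k *m T j).
Proof.
move=> _ n2 hz _ _ T.
split; first exact: That_sqr.
split; first exact: That_braid4_first.
split; first exact: That_braid.
split; first exact: That_braid4_last.
by move=> j k _; apply: That_comm.
Qed.
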